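(* Let $V\in\mathbb{C}^{N\times N}$ be unitary and $b\in\mathbb{C}^N$ nonzero. Define, in exact arithmetic, the unitary Arnoldi process: $q_1=b/\|b\|_2$, $q_0=0$, $u_{01}=0$, and for $k=1,2,\dots,n$: $$v_k=Vq_k,\qquad u_{k-1,k}=-\frac{q_{k-1}^*v_k}{q_{k-1}^*v_{k-1}}\ (k>1),\qquad l_{kk}=q_k^*v_k+u_{k-1,k}\,q_k^*v_{k-1},$$ $$\tilde q_{k+1}=v_k-l_{kk}q_k+u_{k-1,k}v_{k-1},\qquad l_{k+1,k}=\|\tilde q_{k+1}\|_2,\qquad q_{k+1}=\tilde q_{k+1}/l_{k+1,k}$$ (with $v_0=0$). Assume that for $k=1,\dots,n$ no breakdown occurs, i.e. $l_{k+1,k}\neq0$ and $q_{k-1}^*v_{k-1}\neq0$ for $k>1$. Then for each $k\le n$: the vectors $q_1,\dots,q_{k+1}$ are orthonormal and $q_1,\dots,q_k$ span the Krylov subspace $\mathrm{span}\{b,Vb,\dots,V^{k-1}b\}$; with $Q_k=[q_1,\dots,q_k]$, $L_k$ the $k\times k$ lower bidiagonal matrix with diagonal entries $l_{jj}$ and subdiagonal entries $l_{j+1,j}$, $U_k$ the $k\times k$ upper bidiagonal matrix with unit diagonal and superdiagonal entries $u_{j-1,j}$, and $\hat L_k$ the $(k+1)\times k$ matrix obtained by appending the row $l_{k+1,k}e_k^T$ to $L_k$, one has $$VQ_kU_k=Q_kL_k+l_{k+1,k}q_{k+1}e_k^T=Q_{k+1}\hat L_k,$$ and the matrix $\hat L_kU_k^{-1}$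 has orthonormal columns.
   Context: $e_k$ denotes the $k$-th standard unit vector. All computations are in exact arithmetic. *)

From HB Require Import structures.
From mathcomp Require Import all_boot all_order all_algebra.
From mathcomp Require Import sesquilinear spectral.
Set Implicit Arguments. Unset Strict Implicit. Unset Printing Implicit Defensive.
Import Order.TTheory GRing.Theory Num.Theory Num.Def.
Local Open Scope ring_scope.

Section UnitaryArnoldi.
Variables (C : numClosedFieldType) (N : nat) (V : 'M[C]_N) (b : 'cV[C]_N).

Definition adjmx m n (A : 'M[C]_(m, n)) : 'M[C]_(n, m) := (map_mx conjC A)^T.

Definition cdot (x y : 'cV[C]_N) : C := \sum_i (x i 0)^* * y i 0.

Definition norm2 (x : 'cV[C]_N) : C := sqrtC (\sum_i `|x i 0| ^+ 2).

(* One step of the recursion, at (1-based) index k, given qp = q_{k-1} and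
   qc = q_k (with v_j = V q_j, so v_0 = V q_0 = 0). *)
Definition u_of (k : nat) (qp qc : 'cV[C]_N) : C :=
  if (k <= 1)%N then 0
  else - (cdot qp (V *m qc) / cdot qp (V *m qp)).

Definition ldiag_of (k : nat) (qp qc : 'cV[C]_N) : C :=
  cdot qc (V *m qc) + u_of k qp qc * cdot qc (V *m qp).

Definition qtilde_of (k : nat) (qp qc : 'cV[C]_N) : 'cV[C]_N :=
  V *m qc - ldiag_of k qp qc *: qc + u_of k qp qc *: (V *m qp).

Definition next_q (k : nat) (qp qc : 'cV[C]_N) : 'cV[C]_N :=
  (norm2 (qtilde_of k qp qc))^-1 *: qtilde_of k qp qc.

(* qpair k = (q_k, q_{k+1}); q_0 = 0, q_1 = b / ||b||_2 *)
Fixpoint qpair (k : nat) : 'cV[C]_N * 'cV[C]_N :=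
  match k with
  | 0 => (0, (norm2 b)^-1 *: b)
  | k'.+1 => let: (qp, qc) := qpair k' in (qc, next_q k'.+1 qp qc)
  end.

Definition q (k : nat) : 'cV[C]_N := (qpair k).1.
Definition v (k : nat) : 'cV[C]_N := V *m q k.
(* u k = u_{k-1,k}, ldiag k = l_{kk}, qtilde k = \tilde q_{k+1}, lsub k = l_{k+1,k} *)
Definition u (k : nat) : C := u_of k (q k.-1) (q k).
Definition ldiag (k : nat) : C := ldiag_of k (q k.-1) (q k).
Definition qtilde (k : nat) : 'cV[C]_N := qtilde_of k (q k.-1) (q k).
Definition lsub (k : nat) : C := norm2 (qtilde k).

Definition Qmx (k : nat) : 'M[C]_(N, k) := \matrix_(i < N, j < k) q j.+1 i 0.

Definition Lmx (k : nat) : 'M[C]_k :=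
  \matrix_(i < k, j < k)
    (if i == j :> nat then ldiag j.+1
     else if i == j.+1 :> nat then lsub j.+1 else 0).

Definition Umx (k : nat) : 'M[C]_k :=
  \matrix_(i < k, j < k)
    (if i == j :> nat then 1
     else if j == i.+1 :> nat then u j.+1 else 0).

Definition Lhat (k : nat) : 'M[C]_(k.+1, k) :=
  \matrix_(i < k.+1, j < k)
    (if i == j :> nat then ldiag j.+1
     else if i == j.+1 :> nat then lsub j.+1 else 0).

Definition ekT (k : nat) : 'rV[C]_k := \row_(j < k) (j == k.-1 :> nat)%:R.

Definition krylov (k : nat) : 'M[C]_(N, k) :=
  \matrix_(i < N, j < k) ((V ^+ j) *m b) i 0.

End UnitaryArnoldi.

From Pilot Require Import Defs.
From HB Require Import structures.
From mathcomp Require Import all_boot all_order all_algebra.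
From mathcomp Require Import sesquilinear spectral.
From mathcomp Require Import ring zify.
Set Implicit Arguments. Unset Strict Implicit. Unset Printing Implicit Defensive.
Import Order.TTheory GRing.Theory Num.Theory.
Local Open Scope ring_scope.

(* The column relations V (q_k + u_{k-1,k} q_{k-1}) = l_kk q_k + l_{k+1,k} q_{k+1}
   give all the matrix identities entrywise.  Orthonormality is proved by
   induction: q_{m+1} is orthogonal to q_m by the choice of l_mm and to q_{m-1}
   by the choice of u_{m-1,m}.  For the older q_j, pairing the column relation
   with V x (V unitary) shows that q_j^* V x = c_j q_1^* V x whenever
   x is orthogonal to q_1, ..., q_{j-1}.  For x = q_m + u_{m-1,m} q_{m-1} and
   j = m - 1 the left side vanishes while c_{m-1} != 0 (as q_{m-1}^* V q_{m-1}
   != 0), so q_1^* V x = 0 and then q_j^* V x = 0 for every j < m - 1.  The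
   Krylov span follows by counting ranks, and L^_k U_k^-1 = Q_{k+1}^* V Q_k is
   a product of isometries. *)

Section InnerProduct.
Variables (C : numClosedFieldType) (N : nat).
Implicit Types (x y z : 'cV[C]_N) (a : C).

Lemma cdotDl x y z : cdot (x + y) z = cdot x z + cdot y z.
Proof. by rewrite /cdot -big_split; apply: eq_bigr => i _; rewrite mxE rmorphD mulrDl. Qed.

Lemma cdotDr x y z : cdot x (y + z) = cdot x y + cdot x z.
Proof. by rewrite /cdot -big_split; apply: eq_bigr => i _; rewrite mxE mulrDr. Qed.

Lemma cdotZl a x y : cdot (a *: x) y = a^* * cdot x y.
Proof. by rewrite /cdot big_distrr; apply: eq_bigr => i _; rewrite mxE rmorphM -mulrA. Qed.

Lemma cdotZr a x y : cdot x (a *: y) = a * cdot x y.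
Proof. by rewrite /cdot big_distrr; apply: eq_bigr => i _; rewrite mxE mulrCA. Qed.

Lemma cdotNl x y : cdot (- x) y = - cdot x y.
Proof. by rewrite -scaleN1r cdotZl rmorphN1 mulN1r. Qed.

Lemma cdotBr x y z : cdot x (y - z) = cdot x y - cdot x z.
Proof. by rewrite cdotDr -scaleN1r cdotZr mulN1r. Qed.

Lemma cdot0l y : cdot 0 y = 0.
Proof. by rewrite /cdot big1 // => i _; rewrite mxE rmorph0 mul0r. Qed.

Lemma cdotC x y : cdot y x = (cdot x y)^*.
Proof.
by rewrite /cdot rmorph_sum; apply: eq_bigr => i _; rewrite rmorphM /= conjCK mulrC.
Qed.

Lemma cdot_adjmx (W : 'M[C]_N) x y : cdot x (W *m y) = cdot (adjmx W *m x) y.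
Proof.
rewrite /cdot; under eq_bigr do rewrite mxE big_distrr.
rewrite exchange_big; apply: eq_bigr => j _ /=.
rewrite !mxE rmorph_sum big_distrl; apply: eq_bigr => i _ /=.
by rewrite !mxE rmorphM /= conjCK mulrCA mulrA.
Qed.

Lemma adjmxM m k p (A : 'M[C]_(m, k)) (B : 'M[C]_(k, p)) :
  adjmx (A *m B) = adjmx B *m adjmx A.
Proof. by rewrite /adjmx map_mxM trmx_mul. Qed.

Lemma unitarymx_adjmxK (W : 'M[C]_N) : W \is unitarymx -> adjmx W *m W = 1%:M.
Proof. by move=> uW; have := mulmxKtV 1%:M uW erefl; rewrite mul1mx /adjmx map_trmx. Qed.

Lemma cdot_unitarymx (W : 'M[C]_N) x y :
  W \is unitarymx -> cdot (W *m x) (W *m y) = cdot x y.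
Proof. by move=> uW; rewrite cdot_adjmx mulmxA unitarymx_adjmxK ?mul1mx. Qed.

Lemma adjmx_isometryM m k (Q : 'M[C]_(m, k)) p (A : 'M[C]_(k, p)) :
  adjmx Q *m Q = 1%:M -> adjmx (Q *m A) *m (Q *m A) = adjmx A *m A.
Proof. by move=> QQ; rewrite adjmxM -mulmxA (mulmxA (adjmx Q)) QQ mul1mx. Qed.

Lemma norm2_neq0 x : x != 0 -> norm2 x != 0.
Proof.
move=> nz; rewrite /norm2 sqrtC_eq0; apply: contraNneq nz => /eqP.
rewrite psumr_eq0 => [/allP x0|i _]; last by rewrite exprn_ge0.
apply/eqP/matrixP => i j; rewrite ord1 mxE.
by have := x0 i (mem_index_enum _); rewrite /= sqrf_eq0 normr_eq0 => /eqP.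
Qed.

Lemma cdot_normalized x : norm2 x != 0 ->
  cdot ((norm2 x)^-1 *: x) ((norm2 x)^-1 *: x) = 1.
Proof.
move=> nz; rewrite cdotZl cdotZr mulrA.
have -> : cdot x x = \sum_i `|x i 0| ^+ 2.
  by apply: eq_bigr => i _; rewrite normCK mulrC.
have ge0 : 0 <= \sum_i `|x i 0| ^+ 2 by apply: sumr_ge0 => i _; rewrite exprn_ge0.
rewrite (geC0_conj (x := (norm2 x)^-1)) ?invr_ge0 ?sqrtC_ge0 //.
rewrite -expr2 exprVn sqrtCK mulVf //.
by apply: contraNneq nz => s0; rewrite /norm2 s0 sqrtC0.
Qed.

End InnerProduct.

Section BidiagonalSums.
Variable R : pzSemiRingType.

Lemma sum_delta k (t : nat) (x : R) :
  \sum_(l < k) (if l == t :> nat then x else 0) = if (t < k)%N then x else 0.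
Proof.
case: ifP => tk.
  rewrite (bigD1 (Ordinal tk)) //= eqxx big1 ?addr0 // => l /eqP nl.
  by rewrite ifN //; apply/eqP => e; apply: nl; apply: val_inj.
by rewrite big1 // => l _; rewrite ifN //; apply/eqP => e; rewrite -e ltn_ord in tk.
Qed.

Lemma sum_lower_bidiag k (f : nat -> R) (j : nat) (a c : R) : (j < k)%N ->
  \sum_(l < k) f l * (if l == j :> nat then a else if l == j.+1 :> nat then c else 0)
  = f j * a + (if (j.+1 < k)%N then f j.+1 * c else 0).
Proof.
move=> jk; transitivity (\sum_(l < k) ((if l == j :> nat then f j * a else 0)
                            + (if l == j.+1 :> nat then f j.+1 * c else 0))).
  apply: eq_bigr => l _; case: eqP => [->|_]; last by rewrite add0r; case: eqP => [->|]; rewrite ?mulr0.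
  by rewrite ifN ?addr0 //; apply/eqP; lia.
by rewrite big_split /= !sum_delta jk.
Qed.

Lemma sum_upper_bidiag k (f : nat -> R) (j : nat) (c : R) : (j < k)%N ->
  \sum_(l < k) f l * (if l == j :> nat then 1 else if j == l.+1 :> nat then c else 0)
  = f j + (if (0 < j)%N then f j.-1 * c else 0).
Proof.
move=> jk; transitivity (\sum_(l < k) ((if l == j :> nat then f j else 0)
     + (if l == j.-1 :> nat then (if (0 < j)%N then f j.-1 * c else 0) else 0))).
  apply: eq_bigr => l _; case: eqP => [->|lj].
    rewrite mulr1; case: j jk => [|j _] /=; first by rewrite addr0.
    by rewrite ifN ?addr0 //; apply/eqP; lia.
  rewrite add0r; case: eqP => [jl|jl]; first by rewrite jl /= eqxx.
  rewrite mulr0; case: eqP => // lj1; case: (posnP j) => // jp; lia.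
rewrite big_split /= !sum_delta jk; case: j jk => /= [|j jk]; first by rewrite if_same.
by rewrite ltnW.
Qed.

End BidiagonalSums.

Section KrylovSpace.
Variables (C : numClosedFieldType) (N : nat) (V : 'M[C]_N) (b : 'cV[C]_N).

Definition in_krylov m x :=
  exists c : nat -> C, x = \sum_(i < m) c i *: (V ^+ i *m b).

Lemma in_krylov0 m : in_krylov m 0.
Proof. by exists (fun _ => 0); rewrite big1 // => i _; rewrite scale0r. Qed.

Lemma in_krylovD m x y : in_krylov m x -> in_krylov m y -> in_krylov m (x + y).
Proof.
move=> [c ->] [d ->]; exists (fun i => c i + d i).
by rewrite -big_split; apply: eq_bigr => i _; rewrite scalerDl.
Qed.

Lemma in_krylovZ m a x : in_krylov m x -> in_krylov m (a *: x).
Proof.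
move=> [c ->]; exists (fun i => a * c i).
by rewrite scaler_sumr; apply: eq_bigr => i _; rewrite scalerA.
Qed.

Lemma in_krylovW m m' x : (m <= m')%N -> in_krylov m x -> in_krylov m' x.
Proof.
move=> mm [c ->]; exists (fun i => if (i < m)%N then c i else 0).
rewrite (big_ord_widen m' (fun i => c i *: (V ^+ i *m b))) // big_mkcond /=.
by apply: eq_bigr => i _; case: ifP => //; rewrite scale0r.
Qed.

Lemma in_krylovV m x : in_krylov m x -> in_krylov m.+1 (V *m x).
Proof.
move=> [c ->]; exists (fun i => if i is i'.+1 then c i' else 0).
rewrite big_ord_recl /= scale0r add0r mulmx_sumr; apply: eq_bigr => i _.
by rewrite -scalemxAr mulmxA exprS mulmxE.
Qed.

Lemma in_krylov_b : in_krylov 1 b.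
Proof. by exists (fun _ => 1); rewrite big_ord1 scale1r expr0 mul1mx. Qed.

Lemma in_krylov_sub m x : in_krylov m x -> (x^T <= (krylov V b m)^T)%MS.
Proof.
move=> [c ->]; rewrite raddf_sum /=; apply: summx_sub => t _.
rewrite linearZ /=; apply: scalemx_sub.
have -> : (V ^+ t *m b)^T = row t (krylov V b m)^T by apply/rowP => z; rewrite !mxE.
exact: row_sub.
Qed.

End KrylovSpace.

Lemma eqmx_rank_sub (F : fieldType) m1 m2 n (A : 'M[F]_(m1, n)) (B : 'M[F]_(m2, n)) :
  (A <= B)%MS -> (m2 <= \rank A)%N -> (A == B)%MS.
Proof.
move=> sAB rA; rewrite -(mxrank_leqif_eq sAB).2.
by have := rank_leq_row B; have := (mxrank_leqif_eq sAB).1; lia.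
Qed.

Lemma mxrank_adjmx_id (C : numClosedFieldType) m k (Q : 'M[C]_(m, k)) :
  adjmx Q *m Q = 1%:M -> \rank Q = k.
Proof.
move=> QQ; apply/eqP; rewrite eqn_leq rank_leq_col /=.
by have := mxrankM_maxr (adjmx Q) Q; rewrite QQ mxrank1.
Qed.

Section ArnoldiMatrices.
Variables (C : numClosedFieldType) (N : nat) (V : 'M[C]_N) (b : 'cV[C]_N).

Local Notation q := (q V b).
Local Notation u := (u V b).
Local Notation ldiag := (ldiag V b).
Local Notation lsub := (lsub V b).

Lemma q0 : q 0 = 0. Proof. by []. Qed.

Lemma q1 : q 1 = (norm2 b)^-1 *: b. Proof. by []. Qed.

Lemma qSS k : q k.+2 = (lsub k.+1)^-1 *: qtilde V b k.+1.
Proof.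
have snd j : (qpair V b j).2 = q j.+1 by rewrite /q /=; case: (qpair V b j).
transitivity (next_q V k.+1 (q k) (q k.+1)) => //.
by rewrite -snd /= -snd /q; case: (qpair V b k).
Qed.

Lemma Qmx_entry k (A : 'M[C]_N) i (j : 'I_k) : (A *m Qmx V b k) i j = (A *m q j.+1) i 0.
Proof. by rewrite !mxE; apply: eq_bigr => l _; rewrite !mxE. Qed.

Lemma VQU_entry k i (j : 'I_k) :
  (V *m Qmx V b k *m Umx V b k) i j = (V *m (q j.+1 + u j.+1 *: q j)) i 0.
Proof.
rewrite mxE (eq_bigr (fun l : 'I_k => (V *m q l.+1) i 0 *
  (if l == j :> nat then 1 else if j == l.+1 :> nat then u j.+1 else 0))); last first.
  by move=> l _; rewrite Qmx_entry; congr (_ * _); rewrite mxE.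
rewrite (sum_upper_bidiag (fun l => (V *m q l.+1) i 0) _ (ltn_ord j)).
rewrite mulmxDr -scalemxAr; case: (posnP j) => [->|jp].
  by rewrite q0 mulmx0 scaler0 /= !addr0.
by rewrite prednK // !mxE mulrC.
Qed.

Lemma QLhat_entry k i (j : 'I_k) : (Qmx V b k.+1 *m Lhat V b k) i j
  = (ldiag j.+1 *: q j.+1 + lsub j.+1 *: q j.+2) i 0.
Proof.
rewrite mxE (eq_bigr (fun l : 'I_k.+1 => q l.+1 i 0 *
  (if l == j :> nat then ldiag j.+1
   else if l == j.+1 :> nat then lsub j.+1 else 0))); last by move=> l _; rewrite !mxE.
rewrite (sum_lower_bidiag (fun l => q l.+1 i 0) _ _ (leqW (ltn_ord j))).
by rewrite ltnS ltn_ord !mxE mulrC [_ * lsub _]mulrC.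
Qed.

Lemma QL_entry k i (j : 'I_k) :
  (Qmx V b k *m Lmx V b k + lsub k *: (q k.+1 *m ekT C k)) i j
  = (ldiag j.+1 *: q j.+1 + lsub j.+1 *: q j.+2) i 0.
Proof.
rewrite mxE [X in _ + X]mxE mxE (eq_bigr (fun l : 'I_k => q l.+1 i 0 *
  (if l == j :> nat then ldiag j.+1
   else if l == j.+1 :> nat then lsub j.+1 else 0))); last by move=> l _; rewrite !mxE.
rewrite (sum_lower_bidiag (fun l => q l.+1 i 0) _ _ (ltn_ord j)).
rewrite mxE big_ord1 !mxE; case: ifP => jk.
  have -> : (j == k.-1 :> nat) = false by apply/eqP; lia.
  by rewrite mulr0n !mulr0 addr0 mulrC [q _ _ _ * _]mulrC.
have kj : j.+1 = k by have := ltn_ord j; lia.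
have -> : (j == k.-1 :> nat) by apply/eqP; lia.
by rewrite kj mulr1 addr0 mulrC.
Qed.

Lemma ldiagE k : ldiag k = cdot (q k) (V *m (q k + u k *: q k.-1)).
Proof. by rewrite mulmxDr -scalemxAr cdotDr cdotZr. Qed.

Lemma q_in_krylov k : in_krylov V b k (q k).
Proof.
suff : in_krylov V b k (q k) /\ in_krylov V b k.+1 (q k.+1) by case.
elim: k => [|k [qk qk1]]; first by split; [apply: in_krylov0 | apply/in_krylovZ/in_krylov_b].
split => //; rewrite qSS; apply/in_krylovZ/in_krylovD; first apply: in_krylovD.
- exact: in_krylovV.
- by rewrite -scaleN1r scalerA; apply/in_krylovZ/(in_krylovW _ qk1).
- by apply/in_krylovZ/(in_krylovW _ (in_krylovV qk)).
Qed.

Lemma Umx_unit k : Umx V b k \in unitmx.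
Proof.
rewrite unitmxE -det_tr det_trig.
  by rewrite big1 ?unitr1 // => r _; rewrite !mxE eqxx.
apply/is_trig_mxP => r c rc; rewrite !mxE ifN; last by apply/eqP; lia.
by rewrite ifN //; apply/eqP; lia.
Qed.

End ArnoldiMatrices.

Section UnitaryArnoldi.
Variables (C : numClosedFieldType) (N n : nat) (V : 'M[C]_N) (b : 'cV[C]_N).

Local Notation q := (q V b).
Local Notation u := (u V b).
Local Notation ldiag := (ldiag V b).
Local Notation lsub := (lsub V b).

Hypothesis lsub_neq0 : forall k, (1 <= k <= n)%N -> lsub k != 0.

Lemma arnoldi_step k : (1 <= k <= n)%N ->
  V *m (q k + u k *: q k.-1) = ldiag k *: q k + lsub k *: q k.+1.
Proof.
case: k => // k kn; rewrite qSS scalerA mulfV ?lsub_neq0 // scale1r.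
by rewrite /qtilde /qtilde_of mulmxDr -scalemxAr addrA addrCA subrr addr0.
Qed.

Lemma lsub_q_succ k : (1 <= k <= n)%N ->
  lsub k *: q k.+1 = V *m (q k + u k *: q k.-1) - ldiag k *: q k.
Proof. by move=> kn; rewrite arnoldi_step // addrAC subrr add0r. Qed.

Lemma VQU_QL k : (k <= n)%N -> V *m Qmx V b k *m Umx V b k
  = Qmx V b k *m Lmx V b k + lsub k *: (q k.+1 *m ekT C k).
Proof.
move=> kn; apply/matrixP => i j.
by rewrite VQU_entry QL_entry arnoldi_step //; have := ltn_ord j; lia.
Qed.

Lemma VQU_QLhat k : (k <= n)%N -> V *m Qmx V b k *m Umx V b k = Qmx V b k.+1 *m Lhat V b k.
Proof.
move=> kn; apply/matrixP => i j.
by rewrite VQU_entry QLhat_entry arnoldi_step //; have := ltn_ord j; lia.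
Qed.

Hypothesis pivot_neq0 :
  forall k, (1 < k <= n)%N -> cdot (q k.-1) (v V b k.-1) != 0.

Lemma u_orthogonal k : (1 < k <= n)%N ->
  cdot (q k.-1) (V *m (q k + u k *: q k.-1)) = 0.
Proof.
move=> kn; have := pivot_neq0 kn; rewrite /v => pivot.
rewrite mulmxDr -scalemxAr cdotDr cdotZr /Defs.u /u_of ifN; last by lia.
by field.
Qed.

Hypothesis V_unitary : V \is unitarymx.

Lemma cdot_qV_proportional j : (1 <= j <= n.+1)%N -> exists c, forall x,
  (forall i, (1 <= i < j)%N -> cdot (q i) x = 0) ->
  cdot (q j) (V *m x) = c * cdot (q 1) (V *m x).
Proof.
elim: j => // j IH /andP [_ jn].
case: (posnP j) => [->|jpos]; first by exists 1 => x _; rewrite mul1r.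
have jn' : (1 <= j <= n)%N by rewrite jpos.
have /IH [c qjV] : (0 < j <= n.+1)%N by rewrite jpos ltnW.
have lsub_conj_neq0 : (lsub j)^* != 0 by rewrite conjC_eq0 lsub_neq0.
exists (- ((lsub j)^*^-1 * (ldiag j)^* * c)) => x xq.
have /(congr1 (fun y => cdot y (V *m x))) := lsub_q_succ jn'.
rewrite cdotZl cdotDl cdotNl cdot_unitarymx // cdotDl [cdot (u j *: _) _]cdotZl.
rewrite [cdot (ldiag j *: _) _]cdotZl qjV => [|i /andP[i1 ij]];
  last by apply: xq; rewrite i1 ltnW.
have -> : cdot (q j.-1) x = 0.
  case: j jpos xq {IH qjV jn jn' lsub_conj_neq0} => [|[|j]] // _ xq;
    [exact: cdot0l | apply: xq; lia].
by rewrite xq ?jpos ?ltnSn // => e; apply: (mulfI lsub_conj_neq0); rewrite e; field.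
Qed.

Definition orthonormal_upto m := forall i j, (1 <= i <= m)%N -> (1 <= j <= m)%N ->
  cdot (q i) (q j) = (i == j)%:R.

Lemma cdot_q_neq m i j : orthonormal_upto m ->
  (1 <= i <= m)%N -> (1 <= j <= m)%N -> i != j -> cdot (q i) (q j) = 0.
Proof. by move=> qon im jm /negPf ij; rewrite qon // ij. Qed.

Lemma cdot_q_old_step m j : (1 < m <= n)%N -> orthonormal_upto m ->
  (1 <= j)%N -> (j.+1 < m)%N -> cdot (q j) (V *m (q m + u m *: q m.-1)) = 0.
Proof.
move=> mn qon j1 jm; set x := q m + u m *: q m.-1.
have x_orth i : (1 <= i)%N -> (i.+1 < m)%N -> cdot (q i) x = 0.
  by move=> i1 im; rewrite cdotDr cdotZr !(cdot_q_neq qon) ?mulr0 ?addr0 //; lia.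
have /cdot_qV_proportional [c1 qmV] : (1 <= m.-1 <= n.+1)%N by lia.
have c1_neq0 : c1 != 0.
  have := pivot_neq0 mn; rewrite /v qmV => [|i im]; last first.
    by apply: (cdot_q_neq qon); lia.
  by apply: contraNneq => ->; rewrite mul0r.
have q1Vx : cdot (q 1) (V *m x) = 0.
  apply: (mulfI c1_neq0); rewrite mulr0 -qmV => [|i im]; last by apply: x_orth; lia.
  by apply: u_orthogonal.
have /cdot_qV_proportional [cj qjV] : (1 <= j <= n.+1)%N by lia.
by rewrite qjV ?q1Vx ?mulr0 // => i ij; apply: x_orth; lia.
Qed.

Lemma cdot_q_succ m j : (1 <= m <= n)%N -> orthonormal_upto m -> (1 <= j <= m)%N ->
  cdot (q j) (q m.+1) = 0.
Proof.
move=> mn qon jm; apply: (mulfI (lsub_neq0 mn)); rewrite mulr0 -cdotZr.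
rewrite lsub_q_succ // cdotBr cdotZr; have [->|jm'] := eqVneq j m.
  by rewrite -ldiagE qon ?eqxx ?mulr1 ?subrr //; lia.
rewrite (cdot_q_neq qon) ?mulr0 ?subr0 //; last by lia.
have [->|jm1] := eqVneq j m.-1; first by apply: u_orthogonal; lia.
by apply: cdot_q_old_step => //; lia.
Qed.

Hypothesis b_neq0 : b != 0.

Lemma q_orthonormal m : (m <= n.+1)%N -> orthonormal_upto m.
Proof.
elim: m => [_ i j|m IH mn]; first by lia.
have qm_unit : cdot (q m.+1) (q m.+1) = 1.
  case: m {IH} mn => [|m] mn; first by rewrite q1 cdot_normalized // norm2_neq0.
  by rewrite qSS cdot_normalized // lsub_neq0.
move=> i j im jm.
have [m0|mpos] := posnP m.
  have -> : i = 1%N by lia.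
  have -> : j = 1%N by lia.
  by rewrite -m0 qm_unit eqxx.
have mn' : (1 <= m <= n)%N by lia.
have qon := IH (ltnW mn).
have [-> {im}|im'] := eqVneq i m.+1; have [-> {jm}|jm'] := eqVneq j m.+1.
- by rewrite qm_unit.
- by rewrite cdotC cdot_q_succ ?qon ?rmorph0 ?(negPf jm') //; lia.
- by rewrite cdot_q_succ ?qon ?(negPf im') //; lia.
- by apply: qon; lia.
Qed.

Lemma Qmx_isometry m : (m <= n.+1)%N -> adjmx (Qmx V b m) *m Qmx V b m = 1%:M.
Proof.
move=> mn; apply/matrixP => i j; rewrite !mxE.
under eq_bigr do rewrite !mxE.
by rewrite -/(cdot _ _) (q_orthonormal mn) ?eqSS //; have := ltn_ord i; have := ltn_ord j; lia.
Qed.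

Lemma Qmx_krylov k : (k <= n.+1)%N -> ((Qmx V b k)^T == (krylov V b k)^T)%MS.
Proof.
move=> kn; apply: eqmx_rank_sub; last by rewrite mxrank_tr mxrank_adjmx_id ?Qmx_isometry.
apply/row_subP => r; have -> : row r (Qmx V b k)^T = (q r.+1)^T.
  by apply/rowP => t; rewrite !mxE.
by apply/in_krylov_sub/(in_krylovW (ltn_ord r))/q_in_krylov.
Qed.

Lemma Lhat_Umx_isometry k : (k <= n)%N ->
  adjmx (Lhat V b k *m invmx (Umx V b k)) *m (Lhat V b k *m invmx (Umx V b k)) = 1%:M.
Proof.
move=> kn; set A := Lhat V b k *m invmx (Umx V b k).
have QA : Qmx V b k.+1 *m A = V *m Qmx V b k.
  by rewrite mulmxA -VQU_QLhat // mulmxK ?Umx_unit.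
rewrite -(adjmx_isometryM _ (Qmx_isometry (kn : (k.+1 <= n.+1)%N))) QA.
by rewrite adjmx_isometryM ?unitarymx_adjmxK // Qmx_isometry // ltnW.
Qed.

End UnitaryArnoldi.

Theorem proposition2 (C : numClosedFieldType) (N n : nat)
    (V : 'M[C]_N) (b : 'cV[C]_N) :
  V \is unitarymx ->
  b != 0 ->
  (forall k, (1 <= k <= n)%N ->
     lsub V b k != 0 /\
     ((1 < k)%N -> cdot (q V b k.-1) (v V b k.-1) != 0)) ->
  forall k, (1 <= k <= n)%N ->
    [/\ adjmx (Qmx V b k.+1) *m Qmx V b k.+1 = 1%:M,
        ((Qmx V b k)^T == (krylov V b k)^T)%MS,
        V *m Qmx V b k *m Umx V b k
          = Qmx V b k *m Lmx V b k + lsub V b k *: (q V b k.+1 *m ekT C k),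
        V *m Qmx V b k *m Umx V b k = Qmx V b k.+1 *m Lhat V b k
      & adjmx (Lhat V b k *m invmx (Umx V b k))
          *m (Lhat V b k *m invmx (Umx V b k)) = 1%:M].
Proof.
move=> V_unitary b_neq0 no_breakdown k /andP[_ kn].
have lsub_neq0 j : (1 <= j <= n)%N -> lsub V b j != 0 by case/no_breakdown.
have pivot_neq0 j : (1 < j <= n)%N -> cdot (q V b j.-1) (v V b j.-1) != 0.
  move=> jn; have jn' : (1 <= j <= n)%N by lia.
  by apply: (no_breakdown j jn').2; lia.
split.
- exact: (Qmx_isometry lsub_neq0 pivot_neq0 V_unitary b_neq0).
- by apply: (Qmx_krylov lsub_neq0 pivot_neq0 V_unitary b_neq0); rewrite ltnW.
- exact: (VQU_QL lsub_neq0).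
- exact: (VQU_QLhat lsub_neq0).
- exact: (Lhat_Umx_isometry lsub_neq0 pivot_neq0 V_unitary b_neq0).
Qed.
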